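(* Let $N\geq 3$ and let $\Omega\subset\mathbb{R}^N$ be a smooth bounded domain. Let $p\in C^{0,\alpha}(\overline{\Omega})$ (for some $0<\alpha<1$) be non-negative, and let $f:[0,\infty)\to[0,\infty)$ be a non-decreasing function with $f\in C^{0,\alpha}_{\rm loc}[0,\infty)$, $f(0)=0$, $f>0$ on $(0,\infty)$, and $\Lambda:=\sup_{s\geq 1} f(s)/s<\infty$. Then the problem $$\Delta u+|\nabla u|=p(x)f(u)\ \text{ in }\Omega,\qquad u\geq 0\ \text{ in }\Omega,$$ has no positive large solution in $\Omega$, i.e. there is no positive (classical) solution $u$ with $u(x)\to\infty$ as $\operatorname{dist}(x,\partial\Omega)\to 0$.
   Context: A large (explosive, blow-up) solution of the problem in a bounded domain $\Omega$ is a solution $u$ with $u(x)\to\infty$ as $\operatorname{dist}(x,\partial\Omega)\to0$. *)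

From HB Require Import structures.
From mathcomp Require Import all_boot all_order all_algebra.
From mathcomp Require Import all_classical all_reals all_analysis.
Set Implicit Arguments. Unset Strict Implicit. Unset Printing Implicit Defensive.
Import Order.TTheory GRing.Theory Num.Theory.
Import numFieldNormedType.Exports.
Local Open Scope classical_set_scope.
Local Open Scope ring_scope.

Section Defs.
Variables (R : realType) (N : nat).
Local Notation V := 'rV[R]_N.

Definition dotv (x y : V) : R := \sum_(i < N) x 0 i * y 0 i.
Definition enorm (x : V) : R := Num.sqrt (dotv x x).
Definition edist (x y : V) : R := enorm (x - y).

Definition evec (i : 'I_N) : V := \row_(j < N) (i == j)%:R.
Definition partial (i : 'I_N) (g : V -> R) : V -> R := fun x => 'D_(evec i) g x.

Definition iter_partial (l : seq 'I_N) (g : V -> R) : V -> R :=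
  foldr (fun i h => partial i h) g l.

Definition smooth (g : V -> R) : Prop :=
  forall (l : seq 'I_N) (x : V), differentiable (iter_partial l g) x.

Definition C2_on (A : set V) (u : V -> R) : Prop :=
  forall x, A x ->
    differentiable u x /\
    (forall i, differentiable (partial i u) x) /\
    (forall i j, {for x, continuous (partial j (partial i u))}).

Definition laplacian (u : V -> R) (x : V) : R :=
  \sum_(i < N) partial i (partial i u) x.
Definition grad_norm (u : V -> R) (x : V) : R :=
  Num.sqrt (\sum_(i < N) (partial i u x) ^+ 2).

Definition boundary (A : set V) : set V := closure A `\` A.

(* smooth bounded domain: open, connected, nonempty, bounded, and locally the
   boundary is the graph of a C^infinity function over a hyperplane nu^perp
   (nu a unit vector; gamma evaluated on the projection onto nu^perp) with the
   domain lying on one side. *)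
Definition smooth_bounded_domain (A : set V) : Prop :=
  [/\ open A, connected A, A !=set0, bounded_set A &
   forall x0, boundary A x0 ->
     exists r : R, 0 < r /\
     exists nu : V, dotv nu nu = 1 /\
     exists gamma : V -> R, smooth gamma /\
       forall x, edist x x0 < r ->
         (A x <-> gamma (x - dotv x nu *: nu) < dotv x nu)].

Definition holder_on (a : R) (A : set V) (g : V -> R) : Prop :=
  exists C : R, forall x y, A x -> A y -> `|g x - g y| <= C * (edist x y) `^ a.

(* u(x) -> +oo as dist(x, boundary A) -> 0 (dist < d  <=>  some boundary point
   at Euclidean distance < d) *)
Definition blows_up_at_boundary (A : set V) (u : V -> R) : Prop :=
  forall M : R, exists d : R, 0 < d /\
    forall x, A x -> (exists y, boundary A y /\ edist x y < d) -> M < u x.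

End Defs.

Definition holder_loc_nonneg (R : realType) (a : R) (f : R -> R) : Prop :=
  forall M : R, 0 < M -> exists C : R, forall s t, 0 <= s <= M -> 0 <= t <= M ->
    `|f s - f t| <= C * `|s - t| `^ a.

From HB Require Import structures.
From mathcomp Require Import all_boot all_order all_algebra.
From mathcomp Require Import all_classical all_reals all_analysis.
From mathcomp Require Import ring lra.
Import Order.TTheory GRing.Theory Num.Theory.
Import numFieldNormedType.Exports.
Local Open Scope classical_set_scope.
Local Open Scope ring_scope.

Set Implicit Arguments.
Unset Strict Implicit.
Unset Printing Implicit Defensive.

(* Since |grad u| >= 0, p is bounded and f grows at most linearly, a large
   solution satisfies Lap u <= a u + b on Omega for some a >= 1.  The barrier
   h = exp (a x_1) has Lap h = a^2 h, so for n large z = u - n h + b/a is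
   negative somewhere, tends to +oo at the boundary and hence attains a
   negative interior minimum at some m.  There Lap u (m) >= n a^2 h(m), whereas
   Lap u (m) <= a u(m) + b = a z(m) + a n h(m) < a n h(m) <= n a^2 h(m). *)

Section real_functions.
Context {R : realType}.

Lemma is_derive_line (V : normedModType R) (F : V -> R) (x e : V) (t D : R) :
  is_derive (x + t *: e) e F D -> is_derive t 1 (fun s => F (x + s *: e)) D.
Proof.
move=> [dF dD].
have E : (fun h : R => h^-1 *: (((fun s => F (x + s *: e)) \o shift t) (h *: 1)
                                - F (x + t *: e)))
       = (fun h : R => h^-1 *: ((F \o shift (x + t *: e)) (h *: e) - F (x + t *: e))).
  apply: funext => h /=; congr (_ *: (F _ - _)).
  by rewrite [h *: 1]mulr1 scalerDl addrCA addrC.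
apply: DeriveDef; first by rewrite /derivable E.
by rewrite /derive E.
Qed.

Lemma is_derive_expR_affine (c k t : R) :
  is_derive t 1 (fun s => expR (c + s * k)) (k * expR (c + t * k)).
Proof.
have dline := @is_derive_line R^o id c k t k (is_derive_id _ _).
by rewrite mulrC; exact: is_derive1_comp (is_derive_expR _) dline.
Qed.

Lemma lt0_right_of_derive_lt0 (g : R -> R) (c : R) :
  g 0 = 0 -> is_derive (0 : R) 1 g c -> c < 0 ->
  exists2 e : R, 0 < e & forall x, 0 < x < e -> g x < 0.
Proof.
move=> g0 [dg dgc] c0.
have := @cvgr_lt R _ _ _ _ _ dg.
rewrite -[lim _]/('D_1 g 0) dgc => /(_ _ 0 c0) [e /= e0 He].
exists e => // x /andP[x0 xe].
have := He x; rewrite /ball_ /= sub0r normrN gtr0_norm // => /(_ xe).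
rewrite [_%:A]mulr1 addr0 g0 subr0 (gt_eqF x0) => /(_ isT).
by rewrite pmulr_rlt0 // invr_gt0.
Qed.

Lemma second_derivative_ge0_at_local_min (g g1 : R -> R) (c d : R) : 0 < d ->
  (forall t : R, `|t| < d -> g 0 <= g t) ->
  (forall t : R, `|t| < d -> is_derive t 1 g (g1 t)) ->
  is_derive (0 : R) 1 g1 c -> 0 <= c.
Proof.
move=> d0 gmin dg dg1.
have inI t : (t \in `]- d, d[) = (`|t| < d) by rewrite in_itv /= ltr_norml.
have g1_0 : g1 0 = 0.
  have [_ <-] : is_derive (0 : R) 1 g (g1 0) by apply: dg; rewrite normr0.
  apply: derive_val; apply: (@derive1_at_min _ g (- d) d 0).
  - by rewrite (le_trans _ (ltW d0)) // oppr_le0 ltW.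
  - by move=> t; rewrite inI => /dg[].
  - by rewrite inI normr0.
  - by move=> t; rewrite inI; exact: gmin.
rewrite leNgt; apply/negP => c0.
have [e e0 g1_lt0] := lt0_right_of_derive_lt0 g1_0 dg1 c0.
pose s := Num.min e d / 2.
have [s0 se sd] : [/\ 0 < s, s < e & s < d].
  have me : Num.min e d <= e by rewrite ge_min lexx.
  have md : Num.min e d <= d by rewrite ge_min lexx orbT.
  have m0 : 0 < Num.min e d by rewrite lt_min e0 d0.
  rewrite /s; split; lra.
have dg_s x : x \in `]0, s[ -> is_derive x 1 g (g1 x).
  by rewrite in_itv /= => /andP[x0 xs]; apply: dg; rewrite gtr0_norm // (lt_trans xs).
have cg_s : {within `[0, s], continuous g}.
  apply: continuous_in_subspaceT => x; rewrite inE /= in_itv /= => /andP[x0 xs].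
  have [dgx _] : is_derive x 1 g (g1 x) by apply: dg; rewrite ger0_norm // (le_lt_trans xs).
  exact/differentiable_continuous/derivable1_diffP.
have [xi /[!in_itv] /= /andP[xi0 xis] gs] := MVT s0 dg_s cg_s.
have := gmin s; rewrite gtr0_norm // => /(_ sd).
rewrite -subr_ge0 gs subr0 pmulr_lge0 // leNgt g1_lt0 //.
by rewrite xi0 (lt_trans xis se).
Qed.

Lemma ratio_bound_affine_le (f : R -> R) (L : R) :
  (forall s t, 0 <= s -> s <= t -> f s <= f t) ->
  (forall s, 1 <= s -> f s / s <= L) ->
  forall s, 0 <= s -> f s <= `|L| * s + `|f 1|.
Proof.
move=> f_mono fL s s0; have Ls : 0 <= `|L| * s by rewrite mulr_ge0.
have f1 := ler_norm (f 1); have f1_ge0 := normr_ge0 (f 1).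
have [s1|s1] := leP 1 s; last by have := f_mono s 1 s0 (ltW s1); lra.
have := fL s s1; rewrite ler_pdivrMr; last by rewrite (lt_le_trans ltr01).
by have := ler_wpM2r s0 (ler_norm L); lra.
Qed.

End real_functions.

Section euclidean_space.
Context {R : realType} {N : nat}.
Local Notation V := 'rV[R]_N.

Lemma ler_coord_norm (y : V) (j : 'I_N) : `|y 0 j| <= `|y|.
Proof.
have /mapP[k _ ->] : `|y 0 j| \in [seq `|y ij.1 ij.2| | ij : 'I_1 * 'I_N].
  by apply/mapP; exists (0, j) => //=; rewrite mem_enum.
rewrite [leRHS]/Num.Def.normr /= mx_normrE.
by apply/bigmax_geP; right => /=; exists k.
Qed.

Lemma norm_evec_le1 (i : 'I_N) : `|evec R i| <= 1.
Proof.
rewrite [leLHS]/Num.Def.normr /= mx_normrE; apply: bigmax_le => // -[a b] _ /=.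
by rewrite /evec mxE; case: (i == b); rewrite ?normr1 ?normr0.
Qed.

Lemma edist_le_norm (x y : V) : edist x y <= N%:R * `|x - y|.
Proof.
rewrite /edist /enorm /dotv; set m := `|x - y|.
have m0 : 0 <= m by exact: normr_ge0.
have N0 : 0 <= N%:R :> R by [].
have sum_le : \sum_(i < N) (x - y) 0 i * (x - y) 0 i <= (N%:R * m) ^+ 2.
  apply: (@le_trans _ _ (\sum_(i < N) m ^+ 2)).
    apply: ler_sum => i _; rewrite -expr2 -real_normK ?num_real //.
    by rewrite lerXn2r ?nnegrE // ler_coord_norm.
  rewrite sumr_const card_ord -[m ^+ 2 *+ N]mulr_natr.
  have [->|N1] : N%:R = 0 :> R \/ 1 <= N%:R :> R.
    by case: (N) => [|k]; [left|right; rewrite ler1n].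
  - nra.
  - nra.
rewrite -(ger0_norm (mulr_ge0 N0 m0)) -sqrtr_sqr ler_sqrt //.
exact: sqr_ge0.
Qed.

Lemma near_edist_lt (x : V) (d : R) : 0 < d -> \forall y \near x, edist y x < d.
Proof.
move=> d0; have N1 : 0 < N%:R + 1 :> R by rewrite ltr_wpDl.
apply/nbhs_ballP; exists (d / (N%:R + 1)); first by rewrite /= divr_gt0.
move=> y; rewrite -ball_normE /ball_ /= distrC ltr_pdivlMr // => xy.
apply: le_lt_trans (edist_le_norm y x) _.
have := normr_ge0 (y - x); have N0 : 0 <= N%:R :> R by []; nra.
Qed.

Lemma bounded_set_normP (A : set V) :
  bounded_set A -> exists2 B, 0 <= B & forall x, A x -> `|x| <= B.
Proof.
move=> [M [_ HM]]; exists (`|M| + 1); first by rewrite addr_ge0.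
move=> x Ax; apply: (HM (`|M| + 1)) => //.
by rewrite (le_lt_trans (ler_norm M)) // ltrDl.
Qed.

Lemma holder_on_bounded (a : R) (A : set V) (p : V -> R) (x0 : V) :
  0 <= a -> bounded_set A -> A x0 -> holder_on a (closure A) p ->
  exists P, forall x, A x -> p x <= P.
Proof.
move=> a0 Ab Ax0 [C HC]; have [B B0 HB] := bounded_set_normP Ab.
pose D := N%:R * (2 * B).
exists (p x0 + `|C| * D `^ a) => x Ax.
have dist_le : edist x x0 <= D.
  apply: le_trans (edist_le_norm x x0) _; rewrite ler_wpM2l //.
  by have := ler_normB x x0; have := HB _ Ax; have := HB _ Ax0; lra.
have dist_ge0 : 0 <= edist x x0 by exact: sqrtr_ge0.
have pow_le : edist x x0 `^ a <= D `^ a.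
  by rewrite ge0_ler_powR ?nnegrE // (le_trans dist_ge0 dist_le).
have := HC x x0 (subset_closure Ax) (subset_closure Ax0).
have := ler_norm (p x - p x0); have := ler_norm C.
have := powR_ge0 (edist x x0) a; have := normr_ge0 C; nra.
Qed.

Lemma blows_up_at_boundaryD (A : set V) (u g : V -> R) (c : R) :
  blows_up_at_boundary A u -> (forall x, A x -> c <= g x) ->
  blows_up_at_boundary A (u \+ g).
Proof.
move=> ub gc M; have [d [d0 Hd]] := ub (M - c); exists d; split=> // x Ax xd.
by have := Hd x Ax xd; have := gc x Ax; rewrite /=; lra.
Qed.

Lemma sublevel_closed (A : set V) (z : V -> R) (c : R) :
  (forall x, A x -> {for x, continuous z}) -> blows_up_at_boundary A z ->
  closed (A `&` [set y | z y <= c]).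
Proof.
move=> zc zb y yK.
have Ay : A y.
  apply: contrapT => nAy.
  have y_bd : boundary A y by split=> //; apply: closureS yK => w [].
  have [d [d0 Hd]] := zb c.
  have [w [[Aw zw] wy]] := yK _ (near_edist_lt y d0).
  by have := Hd w Aw (ex_intro _ y (conj y_bd wy)); rewrite ltNge zw.
split=> //; rewrite /= leNgt; apply/negP => cz.
have /(_ _) near_gt := @cvgr_gt R _ _ _ z (z y) (zc y Ay) c cz.
have [w [[_ zw] /= zw']] := yK _ near_gt.
by move: zw'; rewrite ltNge zw.
Qed.

Lemma blows_up_attains_min (A : set V) (z : V -> R) (x0 : V) :
  bounded_set A -> A x0 -> (forall x, A x -> {for x, continuous z}) ->
  blows_up_at_boundary A z -> exists2 xs, A xs & forall y, A y -> z xs <= z y.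
Proof.
move=> Ab Ax0 zc zb.
pose K := A `&` [set y | z y <= z x0].
have Kc : compact K.
  apply: bounded_closed_compact; last exact: sublevel_closed.
  by move: Ab; rewrite /= /bounded_near; apply: filterS => M AM w [Aw _]; exact: AM.
have [|||xs /[!inE] -[Axs zxs] xs_min] := EVT_min_rV (f := z) (A := K).
- by exists x0; split => /=.
- exact: Kc.
- by apply: continuous_in_subspaceT => y /[!inE] -[Ay _]; exact: zc.
exists xs => // y Ay; have [zy|zy] := leP (z y) (z x0).
- by apply: xs_min; rewrite inE.
- exact: le_trans zxs (ltW zy).
Qed.

Lemma partial2_ge_at_local_min (u g : V -> R) (x : V) (i : 'I_N) (r : R)
    (g1 : R -> R) (g2 : R) : 0 < r ->
  (forall t : R, `|t| < r -> differentiable u (x + t *: evec R i)) ->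
  differentiable (partial i u) x ->
  (forall t : R, `|t| < r ->
     is_derive t 1 (fun s => g (x + s *: evec R i)) (g1 t)) ->
  is_derive (0 : R) 1 g1 g2 ->
  (forall t : R, `|t| < r ->
     u x - g x <= u (x + t *: evec R i) - g (x + t *: evec R i)) ->
  g2 <= partial i (partial i u) x.
Proof.
move=> r0 du dpu dg dg1 umin; rewrite -subr_ge0; set e := evec R i.
apply: (@second_derivative_ge0_at_local_min _
  (fun t => u (x + t *: e) - g (x + t *: e))
  (fun t => partial i u (x + t *: e) - g1 t) _ r r0).
- by move=> t /umin; rewrite scale0r addr0.
- move=> t rt; apply: is_deriveB (dg t rt).
  by apply: is_derive_line; apply: DeriveDef => //; exact/diff_derivable/du.
- apply: is_deriveB dg1.
  have := @is_derive_line _ _ (partial i u) x e 0 (partial i (partial i u) x).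
  by rewrite scale0r addr0; apply; apply: DeriveDef => //; exact: diff_derivable.
Qed.

Lemma laplacian_ge_at_min_sub_exp (A : set V) (u : V -> R) (x : V)
    (n a : R) (i0 : 'I_N) :
  open A -> C2_on A u -> A x ->
  (forall y, A y -> u x - n * expR (a * x 0 i0) <= u y - n * expR (a * y 0 i0)) ->
  n * (a ^+ 2 * expR (a * x 0 i0)) <= laplacian u x.
Proof.
move=> Ao uC2 Ax umin.
have /nbhs_ballP[r r0 rA] : nbhs x A by exact: Ao.
have line_in_A (i : 'I_N) (t : R) : `|t| < r -> A (x + t *: evec R i).
  move=> rt; apply: rA; rewrite -ball_normE /ball_ /= opprD addNKr normrN normrZ.
  by apply: le_lt_trans rt; rewrite -[leRHS]mulr1 ler_wpM2l ?norm_evec_le1.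
pose k (i : 'I_N) := a * evec R i 0 i0.
have partial2_ge i :
    n * (k i * (k i * expR (a * x 0 i0))) <= partial i (partial i u) x.
  have line_exp s : n * expR (a * (x + s *: evec R i) 0 i0)
                  = n * expR (a * x 0 i0 + s * k i).
    by rewrite /k /evec !mxE; congr (_ * expR _); ring.
  apply: (@partial2_ge_at_local_min u (fun y => n * expR (a * y 0 i0)) x i r
    (fun t => n * (k i * expR (a * x 0 i0 + t * k i))) _ r0).
  - by move=> t /(line_in_A i) /uC2[].
  - by have [_ [dpu _]] := uC2 x Ax; exact: dpu.
  - move=> t _; under eq_fun do rewrite line_exp.
    exact/is_deriveZ/is_derive_expR_affine.
  - have := is_deriveZ n (is_deriveZ (k i) (is_derive_expR_affine (a * x 0 i0) (k i) 0)).
    by rewrite mul0r addr0.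
  - by move=> t /(line_in_A i) /umin.
apply: le_trans (ler_sum _ (fun i _ => partial2_ge i)).
rewrite (bigD1 i0) //= big1 ?addr0; last first.
  by move=> j /negbTE ji0; rewrite /k /evec mxE ji0 mulr0 mul0r mulr0.
by rewrite /k /evec mxE eqxx mulr1 expr2 -!mulrA.
Qed.

Lemma no_blowup_of_affine_subsolution (A : set V) (i0 : 'I_N) (u : V -> R)
    (a b : R) :
  open A -> bounded_set A -> A !=set0 -> 1 <= a -> C2_on A u ->
  (forall x, A x -> laplacian u x <= a * u x + b) ->
  ~ blows_up_at_boundary A u.
Proof.
move=> Ao Ab [x0 Ax0] a1 uC2 ulap ublow.
have a0 : 0 < a by apply: lt_le_trans a1.
pose h (y : V) := expR (a * y 0 i0).
have h_gt0 y : 0 < h y by exact: expR_gt0.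
have [B _ HB] := bounded_set_normP Ab.
have h_le y : A y -> h y <= expR (a * B).
  move=> Ay; rewrite ler_expR ler_pM2l //.
  exact: le_trans (ler_norm _) (le_trans (ler_coord_norm y i0) (HB y Ay)).
pose n := `|u x0 + b / a| / h x0 + 1.
have n0 : 0 < n.
  by have := divr_ge0 (normr_ge0 (u x0 + b / a)) (ltW (h_gt0 x0)); rewrite /n; lra.
pose z := u \+ (fun y => b / a - n * h y).
have zx0 : z x0 < 0.
  rewrite /z /= /n mulrDl mul1r divfK ?gt_eqF //.
  by have := ler_norm (u x0 + b / a); have := h_gt0 x0; lra.
have zb : blows_up_at_boundary A z.
  apply: (blows_up_at_boundaryD (c := b / a - n * expR (a * B)) ublow) => y Ay.
  by rewrite lerD2l lerN2 ler_pM2l // h_le.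
have zc y : A y -> {for y, continuous z}.
  move=> Ay; apply: continuousD; first by apply: differentiable_continuous; case: (uC2 y Ay).
  apply: continuousB; first exact: cst_continuous.
  apply: continuousM; first exact: cst_continuous.
  apply: continuous_comp; last exact: continuous_expR.
  apply: continuous_comp; first exact: coord_continuous.
  exact: mulrl_continuous.
have [xs Axs zmin] := blows_up_attains_min Ab Ax0 zc zb.
have lap_ge : n * (a ^+ 2 * h xs) <= laplacian u xs.
  apply: laplacian_ge_at_min_sub_exp Ao uC2 Axs _ => y /zmin; rewrite /z /h /=; lra.
have zxs : z xs < 0 by exact: le_lt_trans (zmin x0 Ax0) zx0.
have rhs_lt : a * u xs + b < a * (n * h xs).
  have ab : a * (b / a) = b by rewrite mulrC divfK ?gt_eqF.
  by move: zxs; rewrite /z /= -(pmulr_rlt0 _ a0) !mulrDr mulrN ab; lra.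
have a_le_a2 : a * (n * h xs) <= n * (a ^+ 2 * h xs).
  rewrite mulrCA ler_pM2l // expr2 -mulrA ler_peMl //.
  by rewrite mulr_ge0 ?ltW.
by have := ulap xs Axs; lra.
Qed.

End euclidean_space.

Theorem theorem1 (R : realType) (N : nat) (hN : (3 <= N)%N)
  (Omega : set 'rV[R]_N) (hOmega : smooth_bounded_domain Omega)
  (alpha : R) (halpha : 0 < alpha < 1)
  (p : 'rV[R]_N -> R) (hp_holder : holder_on alpha (closure Omega) p)
  (hp_nonneg : forall x, closure Omega x -> 0 <= p x)
  (f : R -> R)
  (hf_range : forall s, 0 <= s -> 0 <= f s)
  (hf_mono : forall s t, 0 <= s -> s <= t -> f s <= f t)
  (hf_holder : holder_loc_nonneg alpha f)
  (hf0 : f 0 = 0)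
  (hf_pos : forall s, 0 < s -> 0 < f s)
  (hLambda : exists L : R, forall s, 1 <= s -> f s / s <= L) :
  ~ exists u : 'rV[R]_N -> R,
      [/\ C2_on Omega u,
          (forall x, Omega x -> 0 < u x),
          (forall x, Omega x -> laplacian u x + grad_norm u x = p x * f (u x)) &
          blows_up_at_boundary Omega u].
Proof.
move=> [u [uC2 u_gt0 u_eq u_blow]].
case: hOmega => O_open _ [x0 Ox0] O_bd _.
have [alpha_gt0 _] := andP halpha.
have [P p_le] := holder_on_bounded (ltW alpha_gt0) O_bd Ox0 hp_holder.
have [L fL] := hLambda.
have N_gt0 : (0 < N)%N by apply: leq_trans hN.
have f_le := ratio_bound_affine_le hf_mono fL.
apply: (no_blowup_of_affine_subsolution (a := `|P| * `|L| + 1) (b := `|P| * `|f 1|)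
  (Ordinal N_gt0) O_open O_bd (ex_intro _ x0 Ox0) _ uC2 _ u_blow).
  by rewrite lerDr mulr_ge0.
move=> x Ox; have ux := u_gt0 x Ox.
have p_bd : 0 <= p x <= `|P|.
  apply/andP; split; first exact/hp_nonneg/subset_closure.
  exact: le_trans (p_le x Ox) (ler_norm P).
have pf_le : p x * f (u x) <= `|P| * (`|L| * u x + `|f 1|).
  apply: le_trans (ler_wpM2r (hf_range _ (ltW ux)) (proj2 (andP p_bd))) _.
  by rewrite ler_wpM2l // f_le // ltW.
have := u_eq x Ox; have := sqrtr_ge0 (\sum_(i < N) partial i u x ^+ 2).
rewrite -/(grad_norm u x); have := mulr_ge0 (normr_ge0 P) (normr_ge0 L).
nra.
Qed.
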